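(* Assume $\mathcal I\neq\emptyset$. If the maximal isotropic subspace $\mathcal M=\mathcal M(A,B)$ is strictly positive, then $$\mathbb I+[\mathbb I-\mathfrak S(i\varkappa;\mathcal M)T(i\varkappa;\underline a)]^{-1}\mathfrak S(i\varkappa;\mathcal M)\succ0$$ holds for all sufficiently large $\varkappa\geq0$.
   Context: Let $\mathcal G$ be a finite connected graph with sets $\mathcal I$ of internal edges with lengths $\underline a=\{a_i\}$, $a_i>0$, and $\mathcal E$ of external edges. $\mathcal K=\mathcal K_{\mathcal E}\oplus\mathcal K^{(-)}_{\mathcal I}\oplus\mathcal K^{(+)}_{\mathcal I}\cong\mathbb C^{|\mathcal E|}\oplus\mathbb C^{|\mathcal I|}\oplus\mathbb C^{|\mathcal I|}$, ${}^d\mathcal K=\mathcal K\oplus\mathcal K$. Maximal isotropic subspaces of ${}^d\mathcal K$ (for the form $\langle\chi,J\chi'\rangle$, $J=\begin{pmatrix}0&\mathbb I\\-\mathbb I&0\end{pmatrix}$) are $\mathcal M(A,B)=\{\chi_1\oplus\chi_2:A\chi_1+B\chi_2=0\}$ with $(A,B)$ of rank $\dim\mathcal K$ and $AB^\dagger$ self-adjoint. $\mathfrak S(\mathsf k;\mathcal M)=-(A+i\mathsf kB)^{-1}(A-i\mathsf kB)$ when the inverse exists. $T(\mathsf k;\underline a)=\begin{pmatrix}0&0&0\\0&0&e^{i\mathsf k\underline a}\\0&e^{i\mathsf k\underline a}&0\end{pmatrix}$ w.r.t. $\mathcal K_{\mathcal E}\oplus\mathcal K^{(-)}_{\mathcal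 I}\oplus\mathcal K^{(+)}_{\mathcal I}$, $e^{i\mathsf k\underline a}=\operatorname{diag}(e^{i\mathsf ka_i})$. $C\succ0$ ($C\succcurlyeq0$) means all matrix entries are positive (nonnegative). $\mathcal M$ is strictly positive if there is $\varkappa_0\ge0$ with $\mathbb I+\mathfrak S(i\varkappa;\mathcal M)\succ0$ for all $\varkappa\ge\varkappa_0$. *)

From HB Require Import structures.
From mathcomp Require Import all_boot all_order all_algebra.
From mathcomp Require Import reals sequences exp trigo.
From mathcomp Require Import complex.
Set Implicit Arguments. Unset Strict Implicit. Unset Printing Implicit Defensive.
Import Order.TTheory GRing.Theory Num.Theory.
Local Open Scope ring_scope.

Notation C R := (R[i]).

(* e^{i k a} for complex k and real a:  k = x + i y  gives  e^{-y a}(cos(x a) + i sin(x a)) *)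
Definition expiC (R : realType) (k : C R) (a : R) : C R :=
  Complex (expR (- complex.Im k * a) * cos (complex.Re k * a)) (expR (- complex.Im k * a) * sin (complex.Re k * a)).

Definition iC (R : realType) : C R := Complex 0 1.

Definition adjmx (R : realType) (m n : nat) (M : 'M[C R]_(m, n)) : 'M[C R]_(n, m) :=
  (map_mx Num.conj M)^T.

(* dimension of K = K_E (+) K_I^- (+) K_I^+ *)
Notation dimK nE nI := (nE + (nI + nI))%N.

(* (A,B) defines a maximal isotropic subspace M(A,B): rank(A,B) = dim K and A B^dagger self-adjoint *)
Definition max_isotropic (R : realType) (n : nat) (A B : 'M[C R]_n) : Prop :=
  \rank (row_mx A B) = n /\ A *m adjmx B = adjmx (A *m adjmx B).

Definition ApkB (R : realType) (n : nat) (A B : 'M[C R]_n) (k : C R) : 'M[C R]_n :=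
  A + (iC R * k) *: B.

Definition Smat (R : realType) (n : nat) (A B : 'M[C R]_n) (k : C R) : 'M[C R]_n :=
  - (invmx (A + (iC R * k) *: B) *m (A - (iC R * k) *: B)).

(* T(k; a) w.r.t. K_E (+) K_I^- (+) K_I^+ *)
Definition Tmat (R : realType) (nE nI : nat) (k : C R) (a : 'I_nI -> R)
  : 'M[C R]_(dimK nE nI) :=
  let D := diag_mx (\row_(i < nI) expiC k (a i)) in
  block_mx 0 0 0 (block_mx 0 D D 0).

(* C ≻ 0 : all entries positive (positive complex number = positive real) *)
Definition mx_pos (R : realType) (m n : nat) (M : 'M[C R]_(m, n)) : Prop :=
  forall i j, 0 < M i j.

Definition iK (R : realType) (kappa : R) : C R := Complex 0 kappa.

Definition strictly_positive (R : realType) (n : nat) (A B : 'M[C R]_n) : Prop :=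
  exists kappa0 : R, 0 <= kappa0 /\
    forall kappa : R, kappa0 <= kappa ->
      ApkB A B (iK kappa) \in unitmx /\ mx_pos (1%:M + Smat A B (iK kappa)).

From HB Require Import structures.
From mathcomp Require Import all_boot all_order all_algebra.
From mathcomp Require Import filter reals normedtype.
From mathcomp Require Import sequences exp trigo complex.
From mathcomp Require Import ring lra.
Import Order.TTheory GRing.Theory Num.Theory Normc.
Set Implicit Arguments. Unset Strict Implicit. Unset Printing Implicit Defensive.
Local Open Scope ring_scope.
Local Open Scope complex_scope.

(* For real k we have A + i(ik)B = A - kB, so by Cramer's rule every entry of
   S(ik) is a ratio of polynomials in k.  Positivity of I + S(ik0) at a single
   point shows that no numerator of I + S vanishes identically, so for large k the
   entries of S(ik) are at most k^d and those of I + S(ik) at least k^-d, whereas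
   the entries of T(ik) are exponentials e^(-k a_i), which decay faster than any
   power.  Then I - ST is a small perturbation of I, and
   (I - ST)^-1 S = S + (I - ST)^-1 (ST) S differs from S by a real matrix whose
   entries are o(k^-d); such a perturbation keeps I + S entrywise positive. *)

Section ComplexNorm.
Variable R : rcfType.
Implicit Types (x y z : R[i]) (r : R).

Lemma normc_ge0 z : 0 <= normc z.
Proof. by case: z => a b; apply: sqrtr_ge0. Qed.

Lemma normc_real r : normc r%:C = `|r|.
Proof. by rewrite /normc /= expr0n addr0 sqrtr_sqr. Qed.

Lemma normcX z n : normc (z ^+ n) = normc z ^+ n.
Proof. by elim: n => [|n IHn]; rewrite ?normc1 // !exprS normcM IHn. Qed.

Lemma normcB x y : normc x - normc y <= normc (x - y).
Proof. by rewrite lerBlDr -{1}(subrK y x) le_normcD. Qed.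

Lemma normc_sum (I : Type) (s : seq I) (P : pred I) (F : I -> R[i]) :
  normc (\sum_(i <- s | P i) F i) <= \sum_(i <- s | P i) normc (F i).
Proof.
elim/big_rec2: _ => [|i y1 y2 _ IH]; first by rewrite normc0.
by apply: le_trans (le_normcD _ _) _; rewrite lerD2l.
Qed.

Lemma normc_lt_addr_gt0 x y : 0 < x -> y \is Num.real -> normc y < normc x -> 0 < x + y.
Proof.
move=> x_gt0 y_real; rewrite -ltcR -[(normc y)%:C]/`|y| -[(normc x)%:C]/`|x|.
rewrite (gtr0_norm x_gt0) real_ltr_norml // => /andP[Nx_lt_y _].
by rewrite addrC -[x]opprK subr_gt0.
Qed.
End ComplexNorm.

Section PolynomialGrowth.
Variable R : rcfType.

Lemma normc_horner_sum_le (c : nat -> R[i]) m (k : R) : 1 <= k ->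
  normc (\sum_(i < m) c i * k%:C ^+ i) * k <= (\sum_(i < m) normc (c i)) * k ^+ m.
Proof.
move=> k_ge1; have k_ge0 : 0 <= k by lra.
apply: le_trans (ler_wpM2r k_ge0 (normc_sum _ _ _)) _.
rewrite !mulr_suml; apply: ler_sum => i _.
rewrite normcM normcX normc_real ger0_norm // -mulrA -exprSr.
by apply: ler_wpM2l; [exact: normc_ge0 | exact: ler_weXn2l].
Qed.

Lemma near_normc_horner_le (p : {poly R[i]}) :
  \forall k \near +oo, normc p.[k%:C] <= k ^+ size p.
Proof.
near=> k.
have k_ge1 : 1 <= k by near: k; apply: nbhs_pinfty_ge; rewrite num_real.
have coef_le : \sum_(i < size p) normc p`_i <= k.
  by near: k; apply: nbhs_pinfty_ge; rewrite num_real.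
have := normc_horner_sum_le (fun i => p`_i) (size p) k_ge1.
have kp_ge0 : 0 <= k ^+ size p by rewrite exprn_ge0 // (le_trans ler01).
rewrite -horner_coef => /le_trans/(_ (ler_wpM2r kp_ge0 coef_le)).
by rewrite mulrC ler_pM2l // (lt_le_trans ltr01).
Unshelve. all: by end_near.
Qed.

Lemma near_normc_horner_ge (p : {poly R[i]}) : p != 0 ->
  \forall k \near +oo, k^-1 <= normc p.[k%:C].
Proof.
move=> p_neq0; have [d size_p] : {d | size p = d.+1}.
  by exists (size p).-1; rewrite prednK // size_poly_gt0.
set L := normc (lead_coef p); set K := \sum_(i < d) normc p`_i.
have L_gt0 : 0 < L.
  rewrite lt_def normc_ge0 andbT; apply: contraNneq p_neq0 => /eq0_normc/eqP.
  by rewrite lead_coef_eq0.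
near=> k.
have k_ge1 : 1 <= k by near: k; apply: nbhs_pinfty_ge; rewrite num_real.
have k_ge : (K + 1) / L <= k by near: k; apply: nbhs_pinfty_ge; rewrite num_real.
have lead_p : p`_d = lead_coef p by rewrite lead_coefE size_p.
rewrite horner_coef size_p big_ord_recr /= lead_p.
set q := \sum_(i < d) _; set t := k ^+ d; set N := normc _.
have N_ge : L * t - normc q <= N.
  have := normcB (lead_coef p * k%:C ^+ d) (- q).
  rewrite normcN opprK [_ + q]addrC normcM normcX normc_real ger0_norm; last lra.
  by rewrite /N /L /t; lra.
have q_le : normc q * k <= K * t by apply: normc_horner_sum_le.
have L_k : K + 1 <= L * k by rewrite mulrC -ler_pdivrMr.
have t_ge1 : 1 <= t by apply: exprn_ege1.
have k_gt0 : 0 < k by lra.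
rewrite -(ler_pM2l k_gt0) mulfV ?gt_eqF //.
have : k * (L * t - normc q) <= k * N by apply: ler_wpM2l => //; lra.
have : t * (K + 1) <= t * (L * k) by apply: ler_wpM2l => //; lra.
lra.
Unshelve. all: by end_near.
Qed.
End PolynomialGrowth.

Section MatrixBounds.
Variable R : rcfType.

Lemma normc_mulmx_le m n p (P : 'M[R[i]]_(m, n)) (Q : 'M[R[i]]_(n, p)) a b :
  (forall i j, normc (P i j) <= a) -> (forall i j, normc (Q i j) <= b) ->
  forall i j, normc ((P *m Q) i j) <= n%:R * (a * b).
Proof.
move=> P_le Q_le i j; rewrite mxE; apply: le_trans (normc_sum _ _ _) _.
have -> : n%:R * (a * b) = \sum_(k < n) a * b by rewrite sumr_const card_ord mulr_natl.
apply: ler_sum => k _.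
by rewrite normcM; apply: ler_pM; rewrite ?normc_ge0.
Qed.

Variables (n : nat) (E : 'M[R[i]]_n) (e : R).
Hypotheses (E_le : forall i j, normc (E i j) <= e) (ne_le : n%:R * e <= 1 / 2).

Lemma normc_row_le_of_1B (v : 'rV[R[i]]_n) b :
  (forall j, normc ((v *m (1%:M - E)) 0 j) <= b) -> forall j, normc (v 0 j) <= 2 * b.
Proof.
move=> vE_le j.
have b_ge0 : 0 <= b by apply: le_trans (vE_le j); apply: normc_ge0.
have e_ge0 : 0 <= e by apply: le_trans (E_le j j); apply: normc_ge0.
set s := \sum_(k < n) normc (v 0 k).
have s_ge0 : 0 <= s by apply: sumr_ge0 => k _; apply: normc_ge0.
have v_le k : normc (v 0 k) <= b + e * s.
  have vE_k : normc ((v *m E) 0 k) <= e * s.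
    rewrite mxE mulr_sumr; apply: le_trans (normc_sum _ _ _) _; apply: ler_sum => l _.
    by rewrite normcM mulrC ler_wpM2r ?normc_ge0.
  have := le_normcD (v 0 k - (v *m E) 0 k) ((v *m E) 0 k).
  by move: (vE_le k) vE_k; rewrite mulmxBr mulmx1 !mxE subrK; lra.
have s_le : s <= n%:R * b + n%:R * e * s.
  have -> : n%:R * b + n%:R * e * s = \sum_(k < n) (b + e * s).
    by rewrite sumr_const card_ord -mulr_natl; ring.
  exact: ler_sum.
have s_le2 : s <= 2 * n%:R * b.
  have : n%:R * e * s <= 1 / 2 * s by apply: ler_wpM2r.
  lra.
have : e * s <= e * (2 * n%:R * b) by apply: ler_wpM2l.
have : n%:R * e * b <= 1 / 2 * b by apply: ler_wpM2r.
by have := v_le j; lra.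
Qed.

Lemma invmx_1B_normc_le :
  (1%:M - E) \in unitmx /\ forall i j, normc (invmx (1%:M - E) i j) <= 2.
Proof.
have unit_1B : (1%:M - E) \in unitmx.
  rewrite unitmxE unitfE; apply/negP => /det0P [v /eqP v_neq0 vE0]; apply: v_neq0.
  apply/matrixP => i j; rewrite ord1 mxE; apply/eq0_normc/le_anti.
  rewrite normc_ge0 andbT -[X in _ <= X](mulr0 2); apply: normc_row_le_of_1B => k.
  by rewrite vE0 mxE normc0.
split => // i j.
have := @normc_row_le_of_1B (row i (invmx (1%:M - E))) 1 _ j.
rewrite mulr1 mxE; apply=> k.
rewrite -row_mul mulVmx // !mxE.
by case: (i == k); rewrite ?normc1 ?normc0 //; lra.
Qed.
End MatrixBounds.

Lemma map_conjc_mx_id (R : rcfType) m n (M : 'M[R[i]]_(m, n)) :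
  map_mx conjc M = M <-> forall i j, M i j \is Num.real.
Proof.
split=> [M_conj i j | M_real].
  by rewrite CrealE -{2}M_conj mxE.
by apply/matrixP => i j; rewrite mxE; apply/eqP; rewrite -CrealE.
Qed.

Lemma resolvent_arith (R : realFieldType) (n : nat) (s t : R) :
  1 <= s -> 2 * n%:R ^+ 3 * (s ^+ 3 * t) < 1 ->
  n%:R * (n%:R * (s * t)) <= 1 / 2 /\ n%:R * (n%:R * (2 * (n%:R * (s * t))) * s) < s^-1.
Proof.
move=> s_ge1 small; have s_gt0 : 0 < s by lra.
split; last first.
  by rewrite -(ltr_pM2l s_gt0) mulfV ?gt_eqF //; move: small; rewrite !exprS expr0; lra.
have n2s_ge0 : 0 <= n%:R ^+ 2 * s :> R by rewrite mulr_ge0 ?exprn_ge0 ?ler0n ?(ltW s_gt0).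
have n2s_le : n%:R ^+ 2 * s <= n%:R ^+ 3 * s ^+ 3 :> R.
  apply: ler_pM; rewrite ?exprn_ge0 ?ler0n ?(ltW s_gt0) //.
    by rewrite -!natrX ler_nat; case: n {small n2s_ge0} => // n; rewrite leq_pexp2l.
  by rewrite -{1}[s]expr1 ler_weXn2l.
have [t_le0|t_gt0] := lerP t 0.
  by have := mulr_ge0_le0 n2s_ge0 t_le0; rewrite !exprS expr0; lra.
by have := ler_wpM2r (ltW t_gt0) n2s_le; move: small; rewrite !exprS !expr0; lra.
Qed.

Lemma resolvent_unitmx_mx_pos (R : realType) n (S T : 'M[R[i]]_n) (s t : R) :
  1 <= s -> (forall i j, normc (S i j) <= s) -> (forall i j, normc (T i j) <= t) ->
  (forall i j, T i j \is Num.real) ->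
  mx_pos (1%:M + S) -> (forall i j, s^-1 <= normc ((1%:M + S) i j)) ->
  2 * n%:R ^+ 3 * (s ^+ 3 * t) < 1 ->
  (1%:M - S *m T) \in unitmx /\ mx_pos (1%:M + invmx (1%:M - S *m T) *m S).
Proof.
move=> s_ge1 S_le T_le T_real Y_pos Y_ge small.
have ST_le := normc_mulmx_le S_le T_le.
have [ST_small corr_small] := resolvent_arith s_ge1 small.
have [unit_1B W_le] := invmx_1B_normc_le ST_le ST_small.
split=> //; set W := invmx _.
have WS : W *m S = S + W *m (S *m T) *m S.
  have := mulKmx unit_1B S; rewrite mulmxBl mul1mx mulmxBr => /eqP.
  by rewrite subr_eq mulmxA => /eqP.
have S_real i j : S i j \is Num.real.
  have := gtr0_real (Y_pos i j); rewrite !mxE => Y_real.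
  by rewrite -(addKr (i == j)%:R (S i j)) rpredD ?rpredN ?realn.
have corr_real : forall i j, (W *m (S *m T) *m S) i j \is Num.real.
  apply/map_conjc_mx_id; move/map_conjc_mx_id : S_real => S_conj.
  move/map_conjc_mx_id : T_real => T_conj.
  by rewrite /W !map_mxM map_invmx map_mxB map_mx1 map_mxM S_conj T_conj.
have corr_le := normc_mulmx_le (normc_mulmx_le W_le ST_le) S_le.
move=> i j; rewrite WS addrA mxE.
apply: normc_lt_addr_gt0 (Y_pos i j) (corr_real i j) _.
exact: le_lt_trans (corr_le i j) (lt_le_trans corr_small (Y_ge i j)).
Qed.

Section ExponentialDecay.
Variable R : realType.

Lemma near_lt_expR (a c : R) (D : nat) : 0 < a ->
  \forall k \near +oo, c * k ^+ D < expR (k * a).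
Proof.
move=> a_gt0; have aD_gt0 : 0 < a ^+ D.+1 by apply: exprn_gt0.
have fact_gt0 : 0 < (D.+1)`!%:R :> R by rewrite ltr0n fact_gt0.
near=> k.
have k_ge0 : 0 <= k by near: k; apply: nbhs_pinfty_ge; rewrite num_real.
have k_ge : `|c| * (D.+1)`!%:R / a ^+ D.+1 <= k.
  by near: k; apply: nbhs_pinfty_ge; rewrite num_real.
apply: lt_le_trans (expR_ge1Dxn D (mulr_ge0 k_ge0 (ltW a_gt0))).
have c_le : `|c| <= k * a ^+ D.+1 / (D.+1)`!%:R.
  by rewrite ler_pdivlMr // -ler_pdivrMr.
have kD_ge0 : 0 <= k ^+ D by apply: exprn_ge0.
apply: le_lt_trans (ler_wpM2r kD_ge0 (le_trans (ler_norm c) c_le)) _.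
have -> : k * a ^+ D.+1 / (D.+1)`!%:R * k ^+ D = (k * a) ^+ D.+1 / (D.+1)`!%:R.
  by rewrite exprMn (exprS k); ring.
by rewrite ltrDr ltr01.
Unshelve. all: by end_near.
Qed.

Lemma near_sum_expRN_small (I : finType) (a : I -> R) (c : R) (D : nat) :
  (forall i, 0 < a i) -> \forall k \near +oo, c * (k ^+ D * \sum_i expR (- (k * a i))) < 1.
Proof.
move=> a_gt0; set C := `|c| * #|I|%:R + 1.
have C_gt0 : 0 < C by rewrite ltr_wpDl ?mulr_ge0 ?ler0n.
near=> k.
have lt_exp : forall i, C * k ^+ D < expR (k * a i).
  by near: k; apply: filter_forall => i; apply: near_lt_expR.
have k_ge0 : 0 <= k by near: k; apply: nbhs_pinfty_ge; rewrite num_real.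
have term_le i : k ^+ D * expR (- (k * a i)) <= C^-1.
  by rewrite expRN ler_pdivrMr ?expR_gt0 // ler_pdivlMl // ltW.
have sum_le : k ^+ D * \sum_i expR (- (k * a i)) <= #|I|%:R * C^-1.
  rewrite mulr_sumr mulr_natl -sumr_const.
  by apply: ler_sum => i _; apply: term_le.
have sum_ge0 : 0 <= k ^+ D * \sum_i expR (- (k * a i)).
  by rewrite mulr_ge0 ?exprn_ge0 ?sumr_ge0 // => i _; apply: expR_ge0.
apply: le_lt_trans (ler_wpM2r sum_ge0 (ler_norm c)) _.
apply: le_lt_trans (ler_wpM2l (normr_ge0 c) sum_le) _.
by rewrite mulrA ltr_pdivrMr // mul1r /C ltrDl.
Unshelve. all: by end_near.
Qed.
End ExponentialDecay.

Section TransferMatrix.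
Variables (R : realType) (nE nI : nat) (a : 'I_nI -> R) (k : R).

Lemma expiC_iK x : expiC (iK k) x = (expR (- (k * x)))%:C.
Proof. by rewrite /expiC /iK /= mul0r cos0 sin0 mulr1 mulr0 mulNr. Qed.

Lemma Tmat_iK_entry l m : Tmat nE (iK k) a l m = 0 \/
  exists i, Tmat nE (iK k) a l m = (expR (- (k * a i)))%:C.
Proof.
rewrite /Tmat -[l]splitK -[m]splitK.
case: (split l) => {}l; case: (split m) => {}m; rewrite [unsplit _]/= [unsplit _]/=;
  rewrite ?(block_mxEul, block_mxEur, block_mxEdl, block_mxEdr); try by left; rewrite mxE.
rewrite -[l]splitK -[m]splitK.
case: (split l) => {}l; case: (split m) => {}m; rewrite [unsplit _]/= [unsplit _]/=;
  rewrite ?(block_mxEul, block_mxEur, block_mxEdl, block_mxEdr) ?mxE; try by left.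
all: by case: (l == m); [right; exists l; rewrite expiC_iK | left].
Qed.

Lemma Tmat_iK_real l m : Tmat nE (iK k) a l m \is Num.real.
Proof. by case: (Tmat_iK_entry l m) => [->|[i ->]]; rewrite ?real0 ?complex_real. Qed.

Lemma normc_Tmat_iK_le l m :
  normc (Tmat nE (iK k) a l m) <= \sum_i expR (- (k * a i)).
Proof.
have sum_ge0 : 0 <= \sum_i expR (- (k * a i)) by apply: sumr_ge0 => i _; apply: expR_ge0.
case: (Tmat_iK_entry l m) => [->|[i ->]]; first by rewrite normc0.
rewrite normc_real ger0_norm ?expR_ge0 // (bigD1 i) //= lerDl.
by apply: sumr_ge0 => j _; apply: expR_ge0.
Qed.
End TransferMatrix.

Section PolynomialPencil.
Variables (F : fieldType) (n : nat).

Definition pencil (A B : 'M[F]_n) : 'M[{poly F}]_n :=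
  \matrix_(i, j) ((A i j)%:P + (B i j)%:P * 'X).

Lemma map_mx_horner_pencil (A B : 'M[F]_n) x :
  map_mx (horner_eval x) (pencil A B) = A + x *: B.
Proof.
by apply/matrixP => i j; rewrite !mxE horner_evalE hornerD hornerMX !hornerC mulrC.
Qed.

Lemma invmx_mulmx_horner (P N : 'M[{poly F}]_n) x : (\det P).[x] != 0 ->
  invmx (map_mx (horner_eval x) P) *m map_mx (horner_eval x) N =
  (\det P).[x]^-1 *: map_mx (horner_eval x) (\adj P *m N).
Proof.
move=> detP_neq0; have detPx : \det (map_mx (horner_eval x) P) = (\det P).[x].
  by rewrite det_map_mx.
by rewrite /invmx unitmxE detPx unitfE detP_neq0 map_mxM map_mx_adj scalemxAl.
Qed.
End PolynomialPencil.

Section ScatteringMatrix.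
Variables (R : realType) (n : nat) (A B : 'M[R[i]]_n).

Definition Sden := \det (pencil A (- B)).
Definition Snum := \adj (pencil A (- B)) *m pencil A B.

Lemma iC_mul_iK k : iC R * iK k = - k%:C.
Proof. by apply/eqP; rewrite eq_complex /= !mul0r !mul1r sub0r add0r oppr0 !eqxx. Qed.

Lemma ApkB_iK k : ApkB A B (iK k) = map_mx (horner_eval k%:C) (pencil A (- B)).
Proof. by rewrite map_mx_horner_pencil /ApkB iC_mul_iK scaleNr scalerN. Qed.

Lemma unitmx_ApkB_iK k : (ApkB A B (iK k) \in unitmx) = (Sden.[k%:C] != 0).
Proof. by rewrite ApkB_iK unitmxE det_map_mx unitfE. Qed.

Lemma Smat_iK k : Sden.[k%:C] != 0 ->
  Smat A B (iK k) = - (Sden.[k%:C]^-1 *: map_mx (horner_eval k%:C) Snum).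
Proof.
move=> Sden_neq0; rewrite /Smat.
have -> : A - (iC R * iK k) *: B = map_mx (horner_eval k%:C) (pencil A B).
  by rewrite map_mx_horner_pencil iC_mul_iK scaleNr opprK.
by rewrite -[A + _]/(ApkB A B (iK k)) ApkB_iK invmx_mulmx_horner.
Qed.

Lemma add1mx_Smat_iK k : Sden.[k%:C] != 0 -> 1%:M + Smat A B (iK k) =
  Sden.[k%:C]^-1 *: map_mx (horner_eval k%:C) (Sden%:M - Snum).
Proof.
move=> Sden_neq0; rewrite Smat_iK // map_mxB map_scalar_mx scalerBr.
by rewrite scale_scalar_mx mulVf.
Qed.
End ScatteringMatrix.

Lemma near_Smat_iK_bounds (R : realType) n (A B : 'M[R[i]]_n) k0 :
  ApkB A B (iK k0) \in unitmx -> mx_pos (1%:M + Smat A B (iK k0)) ->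
  exists d, \forall k \near +oo, [/\ ApkB A B (iK k) \in unitmx,
    forall i j, normc (Smat A B (iK k) i j) <= k ^+ d &
    forall i j, (k ^+ d)^-1 <= normc ((1%:M + Smat A B (iK k)) i j)].
Proof.
move=> unit0 pos0; have Sden_k0 : (Sden A B).[k0%:C] != 0 by rewrite -unitmx_ApkB_iK.
have Sden_neq0 : Sden A B != 0 by apply: contraNneq Sden_k0 => ->; rewrite horner0.
set Y := (Sden A B)%:M - Snum A B.
have Y_neq0 (ij : 'I_n * 'I_n) : Y ij.1 ij.2 != 0.
  apply/negP => /eqP Y0; move: (pos0 ij.1 ij.2).
  rewrite add1mx_Smat_iK // -/Y mxE [in X in _ * X]mxE Y0.
  by rewrite horner_evalE horner0 mulr0 ltxx.
set D := maxn (\max_(ij : 'I_n * 'I_n) size (Snum A B ij.1 ij.2)) (size (Sden A B)).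
exists D.+1; near=> k.
have k_ge1 : 1 <= k by near: k; apply: nbhs_pinfty_ge; rewrite num_real.
have Sden_ge : k^-1 <= normc (Sden A B).[k%:C].
  by near: k; apply: near_normc_horner_ge.
have Sden_le : normc (Sden A B).[k%:C] <= k ^+ D.
  apply: le_trans (ler_weXn2l k_ge1 (leq_maxr _ _)).
  by near: k; apply: near_normc_horner_le.
have Snum_le : forall ij : 'I_n * 'I_n, normc (Snum A B ij.1 ij.2).[k%:C] <= k ^+ D.
  move=> ij; apply: le_trans (ler_weXn2l k_ge1 (leq_trans (leq_bigmax ij) (leq_maxl _ _))).
  by move: ij; near: k; apply: filter_forall => ij; apply: near_normc_horner_le.
have Y_ge : forall ij : 'I_n * 'I_n, k^-1 <= normc (Y ij.1 ij.2).[k%:C].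
  by near: k; apply: filter_forall => ij; apply: near_normc_horner_ge.
have k_gt0 : 0 < k := lt_le_trans ltr01 k_ge1.
have Sden_gt0 : 0 < normc (Sden A B).[k%:C] by rewrite (lt_le_trans _ Sden_ge) ?invr_gt0.
have Sden_k : (Sden A B).[k%:C] != 0.
  by apply: contraTneq Sden_gt0 => ->; rewrite normc0 ltxx.
split=> [|i j|i j]; first by rewrite (unitmx_ApkB_iK A B k).
- rewrite Smat_iK // mxE [X in - X]mxE [X in _ * X]mxE horner_evalE.
  rewrite normcN normcM normcV exprS.
  apply: ler_pM; rewrite ?invr_ge0 ?normc_ge0 //; last exact: (Snum_le (i, j)).
  by rewrite -[k in _ <= k]invrK lef_pV2 ?posrE ?invr_gt0.
- rewrite add1mx_Smat_iK // mxE [X in _ * X]mxE horner_evalE.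
  rewrite normcM normcV exprS invfM mulrC.
  apply: ler_pM; rewrite ?invr_ge0 ?exprn_ge0 ?(ltW k_gt0) //; last exact: (Y_ge (i, j)).
  by rewrite lef_pV2 ?posrE ?exprn_gt0.
Unshelve. all: by end_near.
Qed.

Theorem lemma4p6 (R : realType) (nE nI : nat) (a : 'I_nI -> R)
    (A B : 'M[C R]_(dimK nE nI)) :
  (0 < nI)%N ->
  (forall i, 0 < a i) ->
  max_isotropic A B ->
  strictly_positive A B ->
  exists kappa1 : R, 0 <= kappa1 /\
    forall kappa : R, kappa1 <= kappa ->
      let S := Smat A B (iK kappa) in
      let T := Tmat nE (iK kappa) a in
      [/\ ApkB A B (iK kappa) \in unitmx,
          (1%:M - S *m T) \in unitmx &
          mx_pos (1%:M + invmx (1%:M - S *m T) *m S)].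
Proof.
move=> _ a_gt0 _ [k0 [_ S_pos]].
have [unit0 pos0] := S_pos k0 (lexx k0).
have [d near_S] := near_Smat_iK_bounds unit0 pos0.
suff [M [_ HM]] : \forall k \near +oo, [/\ ApkB A B (iK k) \in unitmx,
    (1%:M - Smat A B (iK k) *m Tmat nE (iK k) a) \in unitmx &
    mx_pos (1%:M + invmx (1%:M - Smat A B (iK k) *m Tmat nE (iK k) a) *m Smat A B (iK k))].
  exists (Num.max 0 (M + 1)); split=> [|k]; first by rewrite le_max lexx.
  by rewrite ge_max => /andP[_ Mk]; apply: HM; apply: lt_le_trans Mk; rewrite ltrDl.
near=> k.
have [unit_k S_le Y_ge] : [/\ ApkB A B (iK k) \in unitmx,
    forall i j, normc (Smat A B (iK k) i j) <= k ^+ d &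
    forall i j, (k ^+ d)^-1 <= normc ((1%:M + Smat A B (iK k)) i j)] by near: k.
have k_ge1 : 1 <= k by near: k; apply: nbhs_pinfty_ge; rewrite num_real.
have [_ Y_pos] : ApkB A B (iK k) \in unitmx /\ mx_pos (1%:M + Smat A B (iK k)).
  by apply: S_pos; near: k; apply: nbhs_pinfty_ge; rewrite num_real.
have small : 2 * (dimK nE nI)%:R ^+ 3 * ((k ^+ d) ^+ 3 * \sum_i expR (- (k * a i))) < 1.
  by rewrite -exprM; near: k; apply: near_sum_expRN_small.
have [unit_1B pos_resolvent] := resolvent_unitmx_mx_pos (exprn_ege1 d k_ge1) S_le
  (normc_Tmat_iK_le (nE := nE) a k) (Tmat_iK_real (nE := nE) a k) Y_pos Y_ge small.
by split.
Unshelve. all: by end_near.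
Qed.
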